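(* Let $\mathrm{FOV}_{\min}\in(0,\pi/2]$, $L_{\max}>0$, $A_{\max}>0$. The constrained problem of maximising $R(B,\mathrm{FOV})$ over $B>0$, $\mathrm{FOV}\in(0,\pi/2]$ subject to $\mathrm{FOV}\ge\mathrm{FOV}_{\min}$, $L_{\mathrm{ADR}}(B,\mathrm{FOV})\le L_{\max}$ and $A_{\mathrm{ADR}}(B,\mathrm{FOV})\le A_{\max}$ is equivalent to the single-variable problem of maximising $B\mapsto R(B,f_{\mathrm{FOV}}(B))$ over $\{B>0: f_{\mathrm{FOV}}(B)\le\pi/2\}$: the two suprema coincide, and $(B^*,\mathrm{FOV}^* )$ is a maximiser of the constrained problem if and only if $\mathrm{FOV}^*=f_{\mathrm{FOV}}(B^* )$ and $B^*$ maximises $R(B,f_{\mathrm{FOV}}(B))$ over that set.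
   Context: Fix constants: an integer $N_{\mathrm{tier}}\ge1$; an integer $N_{\mathrm{PD}}\ge 1$; $\mathrm{FF}\in(0,1]$; $K_{\mathrm{PD}}>0$; $n_{\mathrm{CPC}}\ge 1$; $P_{\mathrm t}>0$; $w>0$; $R_{\mathrm{PD}}>0$; $\Gamma>0$; $N_0>0$. The design variables are $B>0$ and $\mathrm{FOV}\in(0,\pi/2]$. Write $\theta=\theta_{\mathrm{CPC}}=\mathrm{FOV}/(2N_{\mathrm{tier}}+1)$. Define $D_2(B)=\frac{1}{K_{\mathrm{PD}}B}\sqrt{N_{\mathrm{PD}}/\mathrm{FF}}$, $D_1(B,\mathrm{FOV})=D_2(B)\,\frac{n_{\mathrm{CPC}}}{\sin\theta}$, $P_{\mathrm r}(B,\mathrm{FOV})=\mathrm{FF}\,P_{\mathrm t}\Big(1-\exp\Big(-\frac{D_1(B,\mathrm{FOV})^2}{2w^2}\Big)\Big)$, and the achievable rate $R(B,\mathrm{FOV})=B\log_2\Big(1+\frac{(R_{\mathrm{PD}}P_{\mathrm r}(B,\mathrm{FOV}))^2}{\Gamma N_0 B}\Big)$. Set $K_1=\frac{1}{2K_{\mathrm{PD}}}\sqrt{N_{\mathrm{PD}}/\mathrm{FF}}$ and $K_2=\frac{\pi N_{\mathrm{PD}}n_{\mathrm{CPC}}^2}{4\,\mathrm{FF}\,K_{\mathrm{PD}}^2}$, and define $L_{\mathrm{ADR}}(B,\mathrm{FOV})=\frac{K_1}{B}\cdot\frac{n_{\mathrm{CPC}}+\sin\theta}{\sin\theta\,\tan\theta}$,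 $A_{\mathrm{ADR}}(B,\mathrm{FOV})=\frac{K_2}{B^2\sin^2\theta}\Big(1+\sum_{i=1}^{N_{\mathrm{tier}}}6i\cos(2i\theta)\Big)$. Given $L_{\max},A_{\max}>0$, define for $\mathrm{FOV}\in(0,\pi/2]$ the boundary functions $f_{\mathrm L}(\mathrm{FOV})=\frac{K_1}{L_{\max}}\cdot\frac{n_{\mathrm{CPC}}+\sin\theta}{\sin\theta\tan\theta}$ and $f_{\mathrm A}(\mathrm{FOV})=\frac{1}{\sin\theta}\sqrt{\frac{K_2}{A_{\max}}\Big(1+\sum_{i=1}^{N_{\mathrm{tier}}}6i\cos(2i\theta)\Big)}$, their (generalised) inverses $f_{\mathrm L}^{-1}(B)=\inf\{\mathrm{FOV}\in(0,\pi/2]: f_{\mathrm L}(\mathrm{FOV})\le B\}$ and $f_{\mathrm A}^{-1}(B)=\inf\{\mathrm{FOV}\in(0,\pi/2]: f_{\mathrm A}(\mathrm{FOV})\le B\}$ (with $\inf\emptyset=+\infty$), and $f_{\mathrm{FOV}}(B)=\max\{\mathrm{FOV}_{\min},\,f_{\mathrm L}^{-1}(B),\,f_{\mathrm A}^{-1}(B)\}$. *)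

From Stdlib Require Import Reals.
From Coquelicot Require Import Coquelicot.
Open Scope R_scope.

Definition Rbar_maxi (x y : Rbar) : Rbar :=
  if Rbar_le_dec x y then y else x.

Definition log2 (x : R) : R := ln x / ln 2.

Definition theta (Ntier : nat) (FOV : R) : R := FOV / (2 * INR Ntier + 1).

Fixpoint tier_sum (n : nat) (th : R) : R :=
  match n with
  | O => 0
  | S m => tier_sum m th + 6 * INR (S m) * cos (2 * INR (S m) * th)
  end.

Definition D2 (NPD : nat) (FF KPD B : R) : R :=
  1 / (KPD * B) * sqrt (INR NPD / FF).

Definition D1 (Ntier NPD : nat) (FF KPD nCPC B FOV : R) : R :=
  D2 NPD FF KPD B * (nCPC / sin (theta Ntier FOV)).

Definition Pr (Ntier NPD : nat) (FF KPD nCPC Pt w B FOV : R) : R :=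
  FF * Pt * (1 - exp (- (D1 Ntier NPD FF KPD nCPC B FOV ^ 2) / (2 * w ^ 2))).

Definition rate (Ntier NPD : nat) (FF KPD nCPC Pt w RPD Gamma N0 B FOV : R) : R :=
  B * log2 (1 + (RPD * Pr Ntier NPD FF KPD nCPC Pt w B FOV) ^ 2 / (Gamma * N0 * B)).

Definition K1 (NPD : nat) (FF KPD : R) : R :=
  1 / (2 * KPD) * sqrt (INR NPD / FF).

Definition K2 (NPD : nat) (FF KPD nCPC : R) : R :=
  PI * INR NPD * nCPC ^ 2 / (4 * FF * KPD ^ 2).

Definition L_ADR (Ntier NPD : nat) (FF KPD nCPC B FOV : R) : R :=
  let th := theta Ntier FOV in
  K1 NPD FF KPD / B * ((nCPC + sin th) / (sin th * tan th)).

Definition A_ADR (Ntier NPD : nat) (FF KPD nCPC B FOV : R) : R :=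
  let th := theta Ntier FOV in
  K2 NPD FF KPD nCPC / (B ^ 2 * sin th ^ 2) * (1 + tier_sum Ntier th).

Definition f_L (Ntier NPD : nat) (FF KPD nCPC Lmax FOV : R) : R :=
  let th := theta Ntier FOV in
  K1 NPD FF KPD / Lmax * ((nCPC + sin th) / (sin th * tan th)).

Definition f_A (Ntier NPD : nat) (FF KPD nCPC Amax FOV : R) : R :=
  let th := theta Ntier FOV in
  1 / sin th * sqrt (K2 NPD FF KPD nCPC / Amax * (1 + tier_sum Ntier th)).

(* generalised inverse: inf { FOV in (0, pi/2] | f FOV <= B }, +oo if empty *)
Definition gen_inv (f : R -> R) (B : R) : Rbar :=
  Glb_Rbar (fun FOV => 0 < FOV <= PI / 2 /\ f FOV <= B).

Definition f_FOV (Ntier NPD : nat) (FF KPD nCPC Lmax Amax FOVmin B : R) : Rbar :=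
  Rbar_maxi (Finite FOVmin)
    (Rbar_maxi (gen_inv (f_L Ntier NPD FF KPD nCPC Lmax) B)
               (gen_inv (f_A Ntier NPD FF KPD nCPC Amax) B)).

(** For a fixed bandwidth [B] both ADR constraints and the lower bound on the
    FOV are monotone in the FOV: [L_ADR] and [A_ADR] decrease with the FOV, so
    the feasible FOVs form the interval [[f_FOV B, pi/2]] (the generalised
    inverses are attained because [f_L] and [f_A] are continuous and
    nonincreasing).  The rate, on the other hand, is strictly decreasing in the
    FOV: a wider FOV means a larger acceptance angle, hence a smaller
    concentrator aperture [D1], less received power and a lower SNR.  So the
    optimal FOV for a given [B] is the left end [f_FOV B] of that interval and
    the two-variable problem collapses onto the curve [FOV = f_FOV B]. *)

From Stdlib Require Import Reals Lra.
From Coquelicot Require Import Coquelicot.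
Open Scope R_scope.

Section MonotoneReduction.

Variables (feasible : R -> R -> Prop) (Rt : R -> R -> R) (g : R -> Rbar) (lo hi : R).

Hypothesis lo_pos : 0 < lo.
Hypothesis g_ge_lo : forall B, Rbar_le (Finite lo) (g B).
Hypothesis feasible_iff :
  forall B F, feasible B F <-> 0 < B /\ 0 < F <= hi /\ Rbar_le (g B) (Finite F).
Hypothesis Rt_decreasing :
  forall B x y, 0 < B -> 0 < x -> x < y -> y <= hi -> Rt B y < Rt B x.

Lemma feasible_at_g B :
  0 < B -> Rbar_le (g B) (Finite hi) -> g B = Finite (real (g B)) /\ feasible B (real (g B)).
Proof.
  intros HB Hhi. pose proof (g_ge_lo B) as Hlo.
  destruct (g B) as [m| |] eqn:Hg; simpl in Hhi, Hlo; try contradiction.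
  split; [reflexivity|]. apply feasible_iff. rewrite Hg. simpl. repeat split; lra.
Qed.

Lemma feasible_g_le B F :
  feasible B F -> Rbar_le (g B) (Finite hi) /\ g B = Finite (real (g B)) /\ real (g B) <= F.
Proof.
  intros [HB [HF Hg]]%feasible_iff.
  assert (Hhi : Rbar_le (g B) (Finite hi)) by (eapply Rbar_le_trans; [exact Hg | simpl; lra]).
  destruct (feasible_at_g B HB Hhi) as [Heq _].
  rewrite Heq in Hg. auto.
Qed.

Lemma Rt_le_at_g B F : feasible B F -> Rt B F <= Rt B (real (g B)).
Proof.
  intros Hf. destruct (feasible_g_le B F Hf) as [Hhi [Heq [Hle|Heq']]].
  - pose proof Hf as [HB [[_ HF] _]]%feasible_iff.
    destruct (feasible_at_g B HB Hhi) as [_ [_ [[Hm _] _]]%feasible_iff].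
    left. apply Rt_decreasing; assumption.
  - rewrite Heq'. apply Rle_refl.
Qed.

Lemma Lub_Rbar_reduce :
  Lub_Rbar (fun r => exists B F, feasible B F /\ r = Rt B F)
  = Lub_Rbar (fun r => exists B, (0 < B /\ Rbar_le (g B) (Finite hi)) /\ r = Rt B (real (g B))).
Proof.
  apply is_lub_Rbar_unique.
  destruct (Lub_Rbar_correct
    (fun r => exists B, (0 < B /\ Rbar_le (g B) (Finite hi)) /\ r = Rt B (real (g B))))
    as [Hub Hleast].
  split.
  - intros r [B [F [Hf ->]]].
    apply Rbar_le_trans with (Finite (Rt B (real (g B)))).
    + apply Rt_le_at_g, Hf.
    + apply Hub. exists B. split; [|reflexivity].
      pose proof Hf as [HB _]%feasible_iff. split; [exact HB | apply (feasible_g_le B F Hf)].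
  - intros b Hb. apply Hleast. intros r [B [[HB Hhi] ->]]. apply Hb.
    exists B, (real (g B)). split; [apply feasible_at_g|]; auto.
Qed.

Lemma argmax_reduce Bs FOVs :
  (feasible Bs FOVs /\ forall B F, feasible B F -> Rt B F <= Rt Bs FOVs)
  <->
  (Finite FOVs = g Bs /\ (0 < Bs /\ Rbar_le (g Bs) (Finite hi)) /\
   forall B, 0 < B /\ Rbar_le (g B) (Finite hi) -> Rt B (real (g B)) <= Rt Bs (real (g Bs))).
Proof.
  split.
  - intros [Hf Hmax].
    destruct (feasible_g_le Bs FOVs Hf) as [Hhi [Heq Hle]].
    pose proof Hf as [HB _]%feasible_iff.
    destruct (feasible_at_g Bs HB Hhi) as [_ Hfg].
    assert (Hopt : real (g Bs) = FOVs).
    { destruct Hle as [Hlt|]; [exfalso|assumption].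
      pose proof Hfg as [_ [[Hm _] _]]%feasible_iff.
      pose proof Hf as [_ [[_ HF] _]]%feasible_iff.
      pose proof (Rt_decreasing Bs _ _ HB Hm Hlt HF).
      pose proof (Hmax Bs _ Hfg). lra. }
    rewrite Hopt in Heq. rewrite Heq in Hhi |- *. simpl.
    split; [reflexivity|]. split; [split; assumption|].
    intros B [HB' Hhi']. apply Hmax, feasible_at_g; assumption.
  - intros [Heq [[HB Hhi] Hmax]].
    destruct (feasible_at_g Bs HB Hhi) as [_ Hfg].
    rewrite <- Heq in Hfg, Hmax. simpl in Hfg, Hmax.
    split; [exact Hfg|]. intros B F Hf.
    apply Rle_trans with (Rt B (real (g B))); [apply Rt_le_at_g, Hf|].
    apply Hmax.
    pose proof Hf as [HB' _]%feasible_iff. split; [exact HB' | apply (feasible_g_le B F Hf)].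
Qed.

End MonotoneReduction.

Lemma Glb_Rbar_le_iff_antitone (f : R -> R) (B m : R) :
  (forall x y, 0 < x -> x <= y -> y <= PI / 2 -> f y <= f x) ->
  continuous f m -> 0 < m <= PI / 2 ->
  Rbar_le (gen_inv f B) (Finite m) <-> f m <= B.
Proof.
  intros Hanti Hcont Hm. unfold gen_inv.
  destruct (Glb_Rbar_correct (fun x => 0 < x <= PI / 2 /\ f x <= B)) as [Hlb Hgreatest].
  split; [|intros HfB; apply Hlb; auto].
  intros Hle. destruct (Rle_dec (f m) B) as [|HfB]; [assumption|exfalso].
  apply Rnot_le_lt in HfB.
  (* By continuity [f > B] on a ball around [m], and by antitonicity also left of [m]. *)
  assert (Hnear : locally m (fun x => B < f x)) by (apply Hcont, open_gt, HfB).
  destruct Hnear as [d Hd].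
  assert (Hbound : Rbar_le (Finite (m + d)) (Glb_Rbar (fun x => 0 < x <= PI / 2 /\ f x <= B))).
  { apply Hgreatest. intros x [Hx HfxB]. simpl.
    destruct (Rle_lt_dec (m + d) x) as [|Hxd]; [assumption|exfalso].
    destruct (Rle_lt_dec x m) as [Hxm|Hmx].
    - pose proof (Hanti x m (proj1 Hx) Hxm (proj2 Hm)). lra.
    - assert (Hball : ball m d x).
      { change (Rabs (x - m) < d). rewrite Rabs_right; lra. }
      pose proof (Hd x Hball). lra. }
  pose proof (Rbar_le_trans _ _ _ Hbound Hle) as Hcontra. simpl in Hcontra.
  pose proof (cond_pos d). lra.
Qed.

Lemma Rbar_maxi_le_iff x y z : Rbar_le (Rbar_maxi x y) z <-> Rbar_le x z /\ Rbar_le y z.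
Proof.
  unfold Rbar_maxi. destruct (Rbar_le_dec x y) as [Hxy|Hyx]; split; try tauto.
  - intros Hyz. split; [eapply Rbar_le_trans; eassumption | exact Hyz].
  - intros Hxz. split; [exact Hxz|].
    eapply Rbar_le_trans; [apply Rbar_lt_le, Rbar_not_le_lt, Hyx | exact Hxz].
Qed.

Lemma Rbar_maxi_ge_l x y : Rbar_le x (Rbar_maxi x y).
Proof. unfold Rbar_maxi. destruct (Rbar_le_dec x y); [assumption | apply Rbar_le_refl]. Qed.

Lemma theta_bounds N F :
  (1 <= N)%nat -> 0 < F <= PI / 2 ->
  0 < theta N F /\ theta N F < PI / 2 /\ 2 * INR N * theta N F <= PI / 2.
Proof.
  intros HN HF. pose proof (le_INR 1 N HN) as HI. simpl in HI.
  assert (Hdef : theta N F * (2 * INR N + 1) = F) by (unfold theta; field; lra).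
  assert (0 < theta N F) by nra.
  repeat split; nra.
Qed.

Lemma theta_lt N x y : x < y -> theta N x < theta N y.
Proof.
  intros Hxy. pose proof (pos_INR N).
  unfold theta, Rdiv. apply Rmult_lt_compat_r; [apply Rinv_0_lt_compat; lra | exact Hxy].
Qed.

Lemma theta_le N x y : x <= y -> theta N x <= theta N y.
Proof. intros [Hlt | ->]; [left; apply theta_lt, Hlt | apply Rle_refl]. Qed.

Lemma sin_cos_pos t : 0 < t < PI / 2 -> 0 < sin t /\ 0 < cos t.
Proof. intros Ht. pose proof PI_RGT_0. split; [apply sin_gt_0 | apply cos_gt_0]; lra. Qed.

Lemma tier_sum_nonneg n th : 0 <= th -> 2 * INR n * th <= PI / 2 -> 0 <= tier_sum n th.
Proof.
  induction n as [|n IH]; intros Hth Hn; cbn [tier_sum]; [lra|].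
  rewrite S_INR in Hn |- *. pose proof (pos_INR n). pose proof PI_RGT_0.
  assert (0 <= cos (2 * (INR n + 1) * th)) by (apply cos_ge_0; nra).
  assert (0 <= tier_sum n th) by (apply IH; nra).
  nra.
Qed.

Lemma tier_sum_antitone n a b :
  0 <= a <= b -> 2 * INR n * b <= PI / 2 -> tier_sum n b <= tier_sum n a.
Proof.
  induction n as [|n IH]; intros Hab Hn; cbn [tier_sum]; [lra|].
  rewrite S_INR in Hn |- *. pose proof (pos_INR n). pose proof PI_RGT_0.
  assert (cos (2 * (INR n + 1) * b) <= cos (2 * (INR n + 1) * a)) by (apply cos_decr_1; nra).
  assert (tier_sum n b <= tier_sum n a) by (apply IH; nra).
  nra.
Qed.

Lemma tier_sum_ex_derive n th : ex_derive (tier_sum n) th.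
Proof.
  induction n as [|n IH]; simpl.
  - apply ex_derive_const.
  - apply (ex_derive_plus (tier_sum n)); [exact IH | auto_derive; exact I].
Qed.

Lemma K1_nonneg NPD FF KPD : 0 < KPD -> 0 <= K1 NPD FF KPD.
Proof.
  intros HK. unfold K1.
  apply Rmult_le_pos; [left; apply Rdiv_lt_0_compat; lra | apply sqrt_pos].
Qed.

Lemma K2_pos NPD FF KPD nCPC :
  (1 <= NPD)%nat -> 0 < FF -> 0 < KPD -> 0 < nCPC -> 0 < K2 NPD FF KPD nCPC.
Proof.
  intros HNPD HF HK Hn. pose proof (le_INR 1 NPD HNPD) as HI. simpl in HI.
  pose proof PI_RGT_0. unfold K2.
  apply Rdiv_lt_0_compat; apply Rmult_lt_0_compat; try apply pow_lt; nra.
Qed.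

(* The concentrator factor of [f_L] as a product of two nonnegative factors
   that are both nonincreasing on [(0, pi/2)]. *)
Lemma cpc_factor_eq n t :
  0 < sin t -> 0 < cos t ->
  (n + sin t) / (sin t * tan t) = (n / sin t ^ 2 + / sin t) * cos t.
Proof. intros Hs Hc. unfold tan. field. lra. Qed.

Lemma sqrt_le_iff_le_pow2 x y : 0 <= x -> 0 <= y -> sqrt x <= y <-> x <= y ^ 2.
Proof.
  intros Hx Hy. split; intros Hle.
  - apply sqrt_le_0; [exact Hx | apply pow2_ge_0 | rewrite sqrt_pow2; assumption].
  - rewrite <- (sqrt_pow2 y) by exact Hy. apply sqrt_le_1_alt, Hle.
Qed.

Section Constraints.

Variables (N NPD : nat) (FF KPD nCPC : R).
Hypotheses (HN : (1 <= N)%nat) (HNPD : (1 <= NPD)%nat)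
  (HFF : 0 < FF) (HKPD : 0 < KPD) (HnCPC : 0 < nCPC).

Lemma f_L_antitone Lmax x y :
  0 < Lmax -> 0 < x -> x <= y -> y <= PI / 2 ->
  f_L N NPD FF KPD nCPC Lmax y <= f_L N NPD FF KPD nCPC Lmax x.
Proof.
  intros HL Hx Hxy Hy. unfold f_L. cbv zeta.
  destruct (theta_bounds N x HN) as [Tx1 [Tx2 _]]; [lra|].
  destruct (theta_bounds N y HN) as [Ty1 [Ty2 _]]; [lra|].
  pose proof (theta_le N x y Hxy) as Hth.
  set (tx := theta N x) in *; set (ty := theta N y) in *.
  destruct (sin_cos_pos tx) as [sx cx]; [lra|]. destruct (sin_cos_pos ty) as [sy cy]; [lra|].
  assert (Hs : sin tx <= sin ty) by (apply sin_incr_1; lra).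
  assert (Hc : cos ty <= cos tx) by (apply cos_decr_1; lra).
  apply Rmult_le_compat_l.
  { apply Rmult_le_pos; [apply K1_nonneg, HKPD | left; apply Rinv_0_lt_compat, HL]. }
  rewrite !cpc_factor_eq by assumption.
  assert (Hinv : / sin ty <= / sin tx) by (apply Rinv_le_contravar; assumption).
  assert (Hinv2 : / sin ty ^ 2 <= / sin tx ^ 2) by (apply Rinv_le_contravar; [apply pow_lt|]; nra).
  assert (Hsq : nCPC / sin ty ^ 2 <= nCPC / sin tx ^ 2) by (apply Rmult_le_compat_l; lra).
  apply Rmult_le_compat; try lra.
  assert (0 < / sin ty) by (apply Rinv_0_lt_compat; lra).
  assert (0 < nCPC / sin ty ^ 2) by (apply Rdiv_lt_0_compat; [lra | apply pow_lt, sy]).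
  lra.
Qed.

Lemma f_A_antitone Amax x y :
  0 < Amax -> 0 < x -> x <= y -> y <= PI / 2 ->
  f_A N NPD FF KPD nCPC Amax y <= f_A N NPD FF KPD nCPC Amax x.
Proof.
  intros HA Hx Hxy Hy. unfold f_A. cbv zeta.
  destruct (theta_bounds N x HN) as [Tx1 [Tx2 _]]; [lra|].
  destruct (theta_bounds N y HN) as [Ty1 [Ty2 Ty3]]; [lra|].
  pose proof (theta_le N x y Hxy) as Hth.
  set (tx := theta N x) in *; set (ty := theta N y) in *.
  destruct (sin_cos_pos tx) as [sx _]; [lra|]. destruct (sin_cos_pos ty) as [sy _]; [lra|].
  assert (Hs : sin tx <= sin ty) by (apply sin_incr_1; lra).
  assert (HKA : 0 < K2 NPD FF KPD nCPC / Amax)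
    by (apply Rdiv_lt_0_compat; [apply K2_pos; assumption | exact HA]).
  pose proof (tier_sum_antitone N tx ty ltac:(lra) Ty3).
  pose proof (tier_sum_nonneg N ty ltac:(lra) Ty3).
  apply Rmult_le_compat.
  - left. apply Rdiv_lt_0_compat; lra.
  - apply sqrt_pos.
  - unfold Rdiv. rewrite !Rmult_1_l. apply Rinv_le_contravar; assumption.
  - apply sqrt_le_1_alt. apply Rmult_le_compat_l; lra.
Qed.

Lemma f_L_continuous Lmax m :
  0 < m <= PI / 2 -> continuous (f_L N NPD FF KPD nCPC Lmax) m.
Proof.
  intros Hm. destruct (theta_bounds N m HN Hm) as [T1 [T2 _]].
  destruct (sin_cos_pos (theta N m)) as [Hs Hc]; [lra|].
  pose proof (pos_INR N).
  apply (ex_derive_continuous (f_L N NPD FF KPD nCPC Lmax)).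
  unfold f_L, theta, tan, Rdiv in *. cbv zeta.
  auto_derive. repeat split; try lra.
  repeat apply Rmult_integral_contrapositive_currified; try lra.
  apply Rinv_neq_0_compat; lra.
Qed.

Lemma f_A_continuous Amax m :
  0 < Amax -> 0 < m <= PI / 2 -> continuous (f_A N NPD FF KPD nCPC Amax) m.
Proof.
  intros HA Hm. destruct (theta_bounds N m HN Hm) as [T1 [T2 T3]].
  destruct (sin_cos_pos (theta N m)) as [Hs _]; [lra|].
  pose proof (pos_INR N).
  assert (Hrad : 0 < K2 NPD FF KPD nCPC / Amax * (1 + tier_sum N (theta N m))).
  { pose proof (tier_sum_nonneg N (theta N m) ltac:(lra) T3).
    apply Rmult_lt_0_compat; [apply Rdiv_lt_0_compat; [apply K2_pos; try assumption|]|]; lra. }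
  apply (ex_derive_continuous (f_A N NPD FF KPD nCPC Amax)). unfold f_A.
  apply (ex_derive_mult (fun x => 1 / sin (theta N x))).
  - unfold theta in *. auto_derive. lra.
  - apply (ex_derive_comp sqrt); [auto_derive; exact Hrad|].
    apply (ex_derive_mult (fun _ => K2 NPD FF KPD nCPC / Amax)); [apply ex_derive_const|].
    apply (ex_derive_plus (fun _ => 1)); [apply ex_derive_const|].
    apply (ex_derive_comp (tier_sum N) (theta N)); [apply tier_sum_ex_derive|].
    unfold theta. auto_derive. lra.
Qed.

Lemma L_ADR_le_iff Lmax B F :
  0 < B -> 0 < Lmax ->
  L_ADR N NPD FF KPD nCPC B F <= Lmax <-> f_L N NPD FF KPD nCPC Lmax F <= B.
Proof.
  intros HB HL. unfold L_ADR, f_L. cbv zeta.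
  set (c := K1 NPD FF KPD * ((nCPC + sin (theta N F)) / (sin (theta N F) * tan (theta N F)))).
  replace (K1 NPD FF KPD / B * _) with (c / B) by (unfold c, Rdiv; ring).
  replace (K1 NPD FF KPD / Lmax * _) with (c / Lmax) by (unfold c, Rdiv; ring).
  rewrite !Rle_div_l by assumption. rewrite Rmult_comm. reflexivity.
Qed.

Lemma A_ADR_le_iff Amax B F :
  0 < B -> 0 < Amax -> 0 < F <= PI / 2 ->
  A_ADR N NPD FF KPD nCPC B F <= Amax <-> f_A N NPD FF KPD nCPC Amax F <= B.
Proof.
  intros HB HA HF. unfold A_ADR, f_A. cbv zeta.
  destruct (theta_bounds N F HN HF) as [T1 [T2 T3]].
  destruct (sin_cos_pos (theta N F)) as [Hs _]; [lra|].
  pose proof (tier_sum_nonneg N (theta N F) ltac:(lra) T3).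
  pose proof (K2_pos NPD FF KPD nCPC HNPD HFF HKPD HnCPC).
  set (s := sin (theta N F)) in *.
  set (P := K2 NPD FF KPD nCPC * (1 + tier_sum N (theta N F))).
  assert (HP : 0 <= P) by (unfold P; nra).
  replace (K2 NPD FF KPD nCPC / (B ^ 2 * s ^ 2) * _) with (P / (B * s) ^ 2)
    by (unfold P; field; lra).
  replace (K2 NPD FF KPD nCPC / Amax * _) with (P / Amax) by (unfold P; field; lra).
  replace (1 / s * _) with (sqrt (P / Amax) / s) by (field; lra).
  assert (HBs : 0 < B * s) by nra.
  rewrite Rle_div_l, Rmult_comm by (apply pow_lt; exact HBs).
  rewrite Rle_div_l by exact Hs.
  rewrite sqrt_le_iff_le_pow2, Rle_div_l by (try apply Rdiv_le_0_compat; lra).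
  rewrite Rmult_comm. reflexivity.
Qed.

Lemma f_FOV_le_iff Lmax Amax FOVmin B F :
  0 < B -> 0 < Lmax -> 0 < Amax -> 0 < F <= PI / 2 ->
  Rbar_le (f_FOV N NPD FF KPD nCPC Lmax Amax FOVmin B) (Finite F) <->
  FOVmin <= F /\ L_ADR N NPD FF KPD nCPC B F <= Lmax /\ A_ADR N NPD FF KPD nCPC B F <= Amax.
Proof.
  intros HB HL HA HF. unfold f_FOV. rewrite !Rbar_maxi_le_iff.
  rewrite (Glb_Rbar_le_iff_antitone _ B F (fun x y => f_L_antitone Lmax x y HL)
             (f_L_continuous Lmax F HF) HF).
  rewrite (Glb_Rbar_le_iff_antitone _ B F (fun x y => f_A_antitone Amax x y HA)
             (f_A_continuous Amax F HA HF) HF).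
  rewrite L_ADR_le_iff, A_ADR_le_iff by assumption.
  reflexivity.
Qed.

End Constraints.

Lemma log2_lt x y : 0 < x < y -> log2 x < log2 y.
Proof.
  intros Hxy. assert (Hln2 : 0 < ln 2) by (rewrite <- ln_1; apply ln_increasing; lra).
  unfold log2, Rdiv. apply Rmult_lt_compat_r; [apply Rinv_0_lt_compat, Hln2|].
  apply ln_increasing; lra.
Qed.

Lemma capacity_lt B c p q :
  0 < B -> 0 < c -> 0 <= p < q ->
  B * log2 (1 + p ^ 2 / (c * B)) < B * log2 (1 + q ^ 2 / (c * B)).
Proof.
  intros HB Hc Hpq. assert (HcB : 0 < / (c * B)) by (apply Rinv_0_lt_compat; nra).
  assert (Hsq : p ^ 2 < q ^ 2) by nra.
  assert (0 <= p ^ 2) by apply pow2_ge_0.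
  apply Rmult_lt_compat_l; [exact HB|]. apply log2_lt. unfold Rdiv. nra.
Qed.

Lemma gaussian_capture_nonneg w a : 0 < w -> 0 <= 1 - exp (- (a ^ 2) / (2 * w ^ 2)).
Proof.
  intros Hw. assert (Hexp : - (a ^ 2) / (2 * w ^ 2) <= 0).
  { unfold Rdiv. assert (0 < / (2 * w ^ 2)) by (apply Rinv_0_lt_compat; nra). nra. }
  enough (exp (- (a ^ 2) / (2 * w ^ 2)) <= exp 0) by (rewrite exp_0 in *; lra).
  destruct Hexp as [Hlt | ->]; [left; apply exp_increasing, Hlt | apply Rle_refl].
Qed.

Lemma gaussian_capture_lt w a b :
  0 < w -> 0 <= a < b ->
  1 - exp (- (a ^ 2) / (2 * w ^ 2)) < 1 - exp (- (b ^ 2) / (2 * w ^ 2)).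
Proof.
  intros Hw Hab. assert (0 < / (2 * w ^ 2)) by (apply Rinv_0_lt_compat; nra).
  enough (exp (- (b ^ 2) / (2 * w ^ 2)) < exp (- (a ^ 2) / (2 * w ^ 2))) by lra.
  assert (a ^ 2 < b ^ 2) by nra.
  apply exp_increasing. unfold Rdiv. nra.
Qed.

Lemma D1_lt N NPD FF KPD nCPC B x y :
  (1 <= N)%nat -> (1 <= NPD)%nat -> 0 < FF -> 0 < KPD -> 0 < nCPC ->
  0 < B -> 0 < x -> x < y -> y <= PI / 2 ->
  0 < D1 N NPD FF KPD nCPC B y < D1 N NPD FF KPD nCPC B x.
Proof.
  intros HN HNPD HFF HKPD Hn HB Hx Hxy Hy.
  destruct (theta_bounds N x HN) as [Tx1 [Tx2 _]]; [lra|].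
  destruct (theta_bounds N y HN) as [Ty1 [Ty2 _]]; [lra|].
  pose proof (theta_lt N x y Hxy) as Hth.
  assert (Hs : sin (theta N x) < sin (theta N y)) by (apply sin_increasing_1; lra).
  destruct (sin_cos_pos (theta N x)) as [sx _]; [lra|].
  assert (HD2 : 0 < D2 NPD FF KPD B).
  { pose proof (le_INR 1 NPD HNPD) as HI. simpl in HI. unfold D2.
    apply Rmult_lt_0_compat; [apply Rdiv_lt_0_compat; nra|].
    apply sqrt_lt_R0, Rdiv_lt_0_compat; lra. }
  assert (Hinv : / sin (theta N y) < / sin (theta N x)) by (apply Rinv_lt_contravar; nra).
  assert (0 < / sin (theta N y)) by (apply Rinv_0_lt_compat; lra).
  unfold D1, Rdiv. split; apply Rmult_lt_compat_l || apply Rmult_lt_0_compat; nra.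
Qed.

Lemma rate_decreasing N NPD FF KPD nCPC Pt w RPD Gamma N0 B x y :
  (1 <= N)%nat -> (1 <= NPD)%nat -> 0 < FF -> 0 < KPD -> 0 < nCPC -> 0 < Pt -> 0 < w ->
  0 < RPD -> 0 < Gamma -> 0 < N0 -> 0 < B -> 0 < x -> x < y -> y <= PI / 2 ->
  rate N NPD FF KPD nCPC Pt w RPD Gamma N0 B y < rate N NPD FF KPD nCPC Pt w RPD Gamma N0 B x.
Proof.
  intros HN HNPD HFF HKPD Hn HPt Hw HRPD HG HN0 HB Hx Hxy Hy.
  destruct (D1_lt N NPD FF KPD nCPC B x y) as [HDy HD]; try assumption.
  pose proof (gaussian_capture_lt w _ _ Hw (conj (Rlt_le _ _ HDy) HD)).
  pose proof (gaussian_capture_nonneg w (D1 N NPD FF KPD nCPC B y) Hw).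
  unfold rate, Pr. apply capacity_lt; [exact HB | nra|].
  assert (0 < RPD * (FF * Pt)) by (apply Rmult_lt_0_compat; nra).
  split; nra.
Qed.

Theorem theorem2
  (Ntier NPD : nat) (FF KPD nCPC Pt w RPD Gamma N0 FOVmin Lmax Amax : R)
  (HNtier : (1 <= Ntier)%nat) (HNPD : (1 <= NPD)%nat)
  (HFF : 0 < FF <= 1) (HKPD : 0 < KPD) (HnCPC : 1 <= nCPC) (HPt : 0 < Pt)
  (Hw : 0 < w) (HRPD : 0 < RPD) (HGamma : 0 < Gamma) (HN0 : 0 < N0)
  (HFOVmin : 0 < FOVmin <= PI / 2) (HLmax : 0 < Lmax) (HAmax : 0 < Amax) :
  let Rt := rate Ntier NPD FF KPD nCPC Pt w RPD Gamma N0 in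
  let feasible := fun B FOV =>
    0 < B /\ 0 < FOV <= PI / 2 /\ FOVmin <= FOV /\
    L_ADR Ntier NPD FF KPD nCPC B FOV <= Lmax /\
    A_ADR Ntier NPD FF KPD nCPC B FOV <= Amax in
  let fF := f_FOV Ntier NPD FF KPD nCPC Lmax Amax FOVmin in
  let dom1 := fun B => 0 < B /\ Rbar_le (fF B) (Finite (PI / 2)) in
  (* the two suprema coincide *)
  Lub_Rbar (fun r => exists B FOV, feasible B FOV /\ r = Rt B FOV)
  = Lub_Rbar (fun r => exists B, dom1 B /\ r = Rt B (real (fF B)))
  /\
  (* characterisation of maximisers *)
  (forall Bs FOVs : R,
     (feasible Bs FOVs /\
      forall B FOV, feasible B FOV -> Rt B FOV <= Rt Bs FOVs)
     <->
     (Finite FOVs = fF Bs /\ dom1 Bs /\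
      forall B, dom1 B -> Rt B (real (fF B)) <= Rt Bs (real (fF Bs)))).
Proof.
  intros Rt feasible fF dom1.
  assert (HnCPC0 : 0 < nCPC) by lra.
  pose proof (fun B F HB HF => f_FOV_le_iff Ntier NPD FF KPD nCPC HNtier HNPD (proj1 HFF) HKPD
                HnCPC0 Lmax Amax FOVmin B F HB HLmax HAmax HF) as Hconstraints.
  assert (Hfeasible : forall B F,
    feasible B F <-> 0 < B /\ 0 < F <= PI / 2 /\ Rbar_le (fF B) (Finite F)).
  { intros B F. split.
    - intros (HB & HF & Hcons). split; [exact HB|]. split; [exact HF|].
      apply Hconstraints; assumption.
    - intros (HB & HF & Hle). apply Hconstraints in Hle; [|assumption..]. unfold feasible; tauto. }
  assert (Hlower : forall B, Rbar_le (Finite FOVmin) (fF B)) by (intros B; apply Rbar_maxi_ge_l).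
  assert (Hdecr : forall B x y, 0 < B -> 0 < x -> x < y -> y <= PI / 2 -> Rt B y < Rt B x).
  { intros B x y. apply rate_decreasing; assumption || lra. }
  split.
  - exact (Lub_Rbar_reduce feasible Rt fF FOVmin (PI / 2) (proj1 HFOVmin) Hlower Hfeasible Hdecr).
  - exact (argmax_reduce feasible Rt fF FOVmin (PI / 2) (proj1 HFOVmin) Hlower Hfeasible Hdecr).
Qed.
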